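(* Let $N\ge2$, let $u\in C(S^{N-1},(0,\infty))$ be nonconstant and separable in $S^{N-1}$, and let $M\in O(N)$ and $h_1>h_2$ in $[-1,1]$ be such that $u_M^{-1}(\max_{S^{N-1}}u_M)=\{x\in S^{N-1}:x_N\ge h_1\}$, $u_M^{-1}(\min_{S^{N-1}}u_M)=\{x\in S^{N-1}:x_N\le h_2\}$, $u_M$ is constant on each set $\{x\in S^{N-1}:x_N=h\}$, and $\alpha\mapsto u_M(0_{N-2},\cos\alpha,\sin\alpha)$ is nonincreasing on $[\pi/2,3\pi/2]$ (such $M$ exists). Let $H$ be an open half-space in $\mathbb{R}^N$ with $0\in\partial H$. Then: (i) if $M^{-1}(0_{N-1},1)\in H$, then $u(x)\ge u(\sigma_Hx)$ for all $x\in H\cap S^{N-1}$; (ii) if $M^{-1}(0_{N-1},1)\in\mathbb{R}^N\setminus\overline{H}$, then $u(x)\le u(\sigma_Hx)$ for all $x\in H\cap S^{N-1}$.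
   Context: $S^{N-1}$ is the unit sphere in $\mathbb{R}^N$ centered at $0$; $O(N)$ is the orthogonal group; for $M\in O(N)$, $u_M(x):=u(M^{-1}x)$; $0_k$ is the zero vector of $\mathbb{R}^k$; $\overline{H}$ is the closure of $H$. $\sigma_H$ denotes reflection across $\partial H$. A function $u\in C(S^{N-1},\mathbb{R})$ is separable in $S^{N-1}$ if for every open half-space $H$ with $0\in\partial H$, either $u(x)\ge u(\sigma_Hx)$ for all $x\in H\cap S^{N-1}$, or $u(x)\le u(\sigma_Hx)$ for all $x\in H\cap S^{N-1}$. *)

From Stdlib Require Import Reals.
From mathcomp Require Import ssreflect ssrfun ssrbool eqtype ssrnat seq fintype bigop.
Set Implicit Arguments. Unset Strict Implicit. Unset Printing Implicit Defensive.
Open Scope R_scope.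

Definition vec (N : nat) := 'I_N -> R.

Definition dot {N : nat} (x y : vec N) : R := \big[Rplus/0]_(i < N) (x i * y i).

(* coordinate by natural index (0 outside range); x_N of the paper is coord x (N-1) *)
Definition coord {N : nat} (x : vec N) (k : nat) : R :=
  match (insub k : option 'I_N) with Some i => x i | None => 0 end.

Definition on_sphere {N : nat} (x : vec N) : Prop := dot x x = 1.

Definition cont_on_sphere {N : nat} (u : vec N -> R) : Prop :=
  forall x, on_sphere x -> forall eps, 0 < eps -> exists delta, 0 < delta /\
    forall y, on_sphere y ->
      dot (fun i => x i - y i) (fun i => x i - y i) < delta * delta ->
      Rabs (u x - u y) < eps.

(* Open half-spaces H with 0 in boundary H are exactly {x | dot a x > 0}, a <> 0.
   The reflection across boundary H: *)
Definition in_H {N : nat} (a x : vec N) : Prop := 0 < dot a x.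
Definition in_compl_closure_H {N : nat} (a x : vec N) : Prop := dot a x < 0.
Definition refl {N : nat} (a x : vec N) : vec N :=
  fun i => x i - 2 * (dot a x / dot a a) * a i.

Definition separable {N : nat} (u : vec N -> R) : Prop :=
  forall a : vec N, a <> (fun _ => 0) ->
    (forall x, in_H a x -> on_sphere x -> u (refl a x) <= u x) \/
    (forall x, in_H a x -> on_sphere x -> u x <= u (refl a x)).

Definition mat (N : nat) := 'I_N -> 'I_N -> R.
Definition mapp {N : nat} (M : mat N) (x : vec N) : vec N :=
  fun i => \big[Rplus/0]_(j < N) (M i j * x j).
Definition trmat {N : nat} (M : mat N) : mat N := fun i j => M j i.
Definition orthogonal {N : nat} (M : mat N) : Prop :=
  forall i j : 'I_N,
    \big[Rplus/0]_(k < N) (M k i * M k j) = if i == j then 1 else 0.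
(* for orthogonal M, M^{-1} = M^T;  u_M(x) := u(M^{-1} x) *)
Definition rotfun {N : nat} (u : vec N -> R) (M : mat N) : vec N -> R :=
  fun x => u (mapp (trmat M) x).

Definition e_last (N : nat) : vec N := fun i => if val i == (N - 1)%N then 1 else 0.

Definition circpt (N : nat) (al : R) : vec N :=
  fun i => if val i == (N - 2)%N then cos al
           else if val i == (N - 1)%N then sin al else 0.
Arguments e_last N : clear implicits.
Arguments circpt N al : clear implicits.

(* The hypotheses on u_M say that u is a nondecreasing function of the height
   <p, x>, where p = M^{-1} e_N: on the sphere u_M depends only on x_N, and
   x_N = sin(al) along the half circle al in [pi/2, 3pi/2], on which u_M is
   nonincreasing.  Reflecting x across a hyperplane with normal a moves the
   height by -2 <a,x>/<a,a> <a,p>, so for <a,x> > 0 the height decreases when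
   p lies in H and increases when p lies outside the closure of H. *)
From HB Require Import structures.
From Stdlib Require Import Reals Lra FunctionalExtensionality Classical.
From mathcomp Require Import ssreflect ssrfun ssrbool eqtype ssrnat seq fintype bigop.
Set Implicit Arguments. Unset Strict Implicit. Unset Printing Implicit Defensive.
Open Scope R_scope.

HB.instance Definition _ :=
  Monoid.isComLaw.Build R 0 Rplus (fun a b c => esym (Rplus_assoc a b c))
    Rplus_comm Rplus_0_l.
HB.instance Definition _ := Monoid.isMulLaw.Build R 0 Rmult Rmult_0_l Rmult_0_r.
HB.instance Definition _ :=
  Monoid.isAddLaw.Build R Rmult Rplus Rmult_plus_distr_r Rmult_plus_distr_l.

Lemma sumR_ge_term n (F : 'I_n -> R) j :
  (forall i, 0 <= F i) -> F j <= \big[Rplus/0]_(i < n) F i.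
Proof.
move=> F_ge0; rewrite (bigD1 j) //= -{1}[F j]Rplus_0_r; apply: Rplus_le_compat_l.
by apply: big_ind => // [|x y]; lra.
Qed.

Lemma dotC N (x y : vec N) : dot x y = dot y x.
Proof. by apply: eq_bigr => i _; rewrite Rmult_comm. Qed.

Lemma dotBZr N (x y z : vec N) c :
  dot x (fun i => y i - c * z i) = dot x y - c * dot x z.
Proof.
rewrite /dot (eq_bigr (fun i => x i * y i + - c * (x i * z i))) => [|i _]; last ring.
by rewrite big_split /= -big_distrr /=; ring.
Qed.

Lemma sqr_le_dot N (x : vec N) j : x j * x j <= dot x x.
Proof. by apply: (@sumR_ge_term _ (fun i => x i * x i)) => i; nra. Qed.

Lemma dot_gt0 N (a : vec N) : a <> (fun _ => 0) -> 0 < dot a a.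
Proof.
move=> a_neq0; have [j aj_neq0] : exists j, a j <> 0.
  apply: NNPP => no_j; apply: a_neq0; apply: functional_extensionality => i.
  by apply: NNPP => ai_neq0; apply: no_j; exists i.
have := sqr_le_dot a j; have : 0 < a j * a j by nra.
lra.
Qed.

Lemma dot_refl N (p a x : vec N) :
  dot p (refl a x) = dot p x - 2 * (dot a x / dot a a) * dot p a.
Proof. exact: dotBZr. Qed.

Lemma refl_on_sphere N (a x : vec N) :
  0 < dot a a -> on_sphere x -> on_sphere (refl a x).
Proof.
rewrite /on_sphere => a_gt0 x1; rewrite {1}/refl dotBZr !(dotC (refl a x)) !dot_refl.
rewrite x1 (dotC x a); field; lra.
Qed.

Lemma coord_sqr_le N (x : vec N) k : on_sphere x -> -1 <= coord x k <= 1.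
Proof.
rewrite /on_sphere /coord => x1; case: insubP => [i _ _|_]; last lra.
by have := sqr_le_dot x i; rewrite x1 => ?; split; nra.
Qed.

Lemma dot_e_last N (x : vec N) : dot x (e_last N) = coord x (N - 1).
Proof.
rewrite /coord; case: insubP => [k _ kE|]; last first.
  case: N x => [|n] x; last by rewrite subSS subn0 ltnSn.
  by rewrite /dot big_ord0.
rewrite /dot (bigD1 k) //= /e_last kE eqxx big1 /=; first lra.
move=> i ik; case: eqP => [iE|_]; last lra.
by case/negP: ik; apply/eqP/val_inj; rewrite /= iE kE.
Qed.

Lemma dot_mapp N (M : mat N) x y : dot (mapp M x) y = dot x (mapp (trmat M) y).
Proof.
rewrite /dot /mapp /trmat.
under eq_bigr => j _ do rewrite Rmult_comm big_distrr /=.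
rewrite exchange_big /=; apply: eq_bigr => i _; rewrite big_distrr /=.
by apply: eq_bigr => j _; ring.
Qed.

Lemma mapp_trmatK N (M : mat N) : orthogonal M -> cancel (mapp M) (mapp (trmat M)).
Proof.
move=> M_orth x; apply: functional_extensionality => i; rewrite /mapp /trmat.
under eq_bigr => j _ do rewrite big_distrr /=.
rewrite exchange_big /= (eq_bigr (fun k => (if i == k then 1 else 0) * x k)) => [|k _].
  rewrite (bigD1 i) //= eqxx big1 => [|k ki]; first ring.
  by rewrite eq_sym (negbTE ki); ring.
by rewrite -M_orth big_distrl /=; apply: eq_bigr => j _; ring.
Qed.

Lemma mapp_on_sphere N (M : mat N) x :
  orthogonal M -> on_sphere x -> on_sphere (mapp M x).
Proof. by move=> M_orth; rewrite /on_sphere dot_mapp mapp_trmatK. Qed.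

Lemma coord_circpt N al : (2 <= N)%N -> coord (circpt N al) (N - 1) = sin al.
Proof.
case: N => [|[|n]] // _; rewrite /coord insubT ?subSS ?subn0 // => lt_n.
by rewrite /circpt /= !subSS !subn0 eqxx; case: eqP => // /esym /n_Sn [].
Qed.

Lemma circpt_on_sphere N al : (2 <= N)%N -> on_sphere (circpt N al).
Proof.
case: N => [|[|n]] // _.
pose k1 := @Ordinal n.+2 n.+1 (ltnSn n.+1); pose k2 := @Ordinal n.+2 n (leqW (ltnSn n)).
have k12 : k1 != k2 by apply/eqP => /(f_equal val) /esym /n_Sn [].
rewrite /on_sphere /dot (bigD1 k1) // (bigD1 k2) /=; last by rewrite eq_sym.
rewrite big1 /circpt /= ?subSS ?subn0.
  rewrite eqxx; case: eqP => [/esym /n_Sn []|_]; rewrite eqxx.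
  have := sin2_cos2 al; rewrite /Rsqr; lra.
move=> i /andP [ik1 ik2].
case: eqP => [iE|_]; first by case/negP: ik2; apply/eqP/val_inj.
case: eqP => [iE|_]; first by case/negP: ik1; apply/eqP/val_inj.
lra.
Qed.

Lemma asin_le s t : -1 <= s <= 1 -> -1 <= t <= 1 -> s <= t -> asin s <= asin t.
Proof.
move=> s_bd t_bd st; apply: Rnot_lt_le => ts.
have [[??] [??]] := (asin_bound s, asin_bound t).
have := sin_increasing_1 _ _ _ _ _ _ ts; rewrite !sin_asin //; lra.
Qed.

Section MonotoneInHeight.

Variables (N : nat) (v : vec N -> R).
Hypothesis N_ge2 : (2 <= N)%N.
Hypothesis v_level : forall x y, on_sphere x -> on_sphere y ->
  coord x (N - 1) = coord y (N - 1) -> v x = v y.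
Hypothesis v_circ : forall al be, PI / 2 <= al -> al <= be -> be <= 3 * PI / 2 ->
  v (circpt N be) <= v (circpt N al).

(* The point circpt (PI - asin s) lies on the half circle and has height s. *)
Lemma level_circpt x :
  on_sphere x -> v x = v (circpt N (PI - asin (coord x (N - 1)))).
Proof.
move=> x1; apply: v_level => //; first exact: circpt_on_sphere.
by rewrite coord_circpt // sin_PI_x sin_asin //; apply: coord_sqr_le.
Qed.

Lemma le_height x y : on_sphere x -> on_sphere y ->
  coord x (N - 1) <= coord y (N - 1) -> v x <= v y.
Proof.
move=> x1 y1 xy; rewrite (level_circpt x1) (level_circpt y1).
have := asin_le (coord_sqr_le (N - 1) x1) (coord_sqr_le (N - 1) y1) xy.
have [[??] [??]] := (asin_bound (coord x (N - 1)), asin_bound (coord y (N - 1))).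
by move=> ?; apply: v_circ; lra.
Qed.

End MonotoneInHeight.

Lemma le_rotfun_height N (u : vec N -> R) (M : mat N) x y :
  (2 <= N)%N -> orthogonal M ->
  (forall x y, on_sphere x -> on_sphere y -> coord x (N - 1) = coord y (N - 1) ->
     rotfun u M x = rotfun u M y) ->
  (forall al be, PI / 2 <= al -> al <= be -> be <= 3 * PI / 2 ->
     rotfun u M (circpt N be) <= rotfun u M (circpt N al)) ->
  on_sphere x -> on_sphere y ->
  dot (mapp (trmat M) (e_last N)) x <= dot (mapp (trmat M) (e_last N)) y ->
  u x <= u y.
Proof.
move=> N_ge2 M_orth u_level u_circ x1 y1.
rewrite !(dotC (mapp _ _)) -!dot_mapp !dot_e_last => xy.
have uE z : u z = rotfun u M (mapp M z) by rewrite /rotfun mapp_trmatK.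
rewrite !uE; apply: (le_height N_ge2 u_level u_circ) => //; exact: mapp_on_sphere.
Qed.

Theorem corollary2p3 (N : nat) (u : vec N -> R) (M : mat N) (h1 h2 : R)
  (a : vec N) :
  (2 <= N)%N ->
  cont_on_sphere u ->
  (forall x, on_sphere x -> 0 < u x) ->
  (exists x y, on_sphere x /\ on_sphere y /\ u x <> u y) ->
  separable u ->
  orthogonal M ->
  -1 <= h2 -> h2 < h1 -> h1 <= 1 ->
  (forall x, on_sphere x ->
     ((forall y, on_sphere y -> rotfun u M y <= rotfun u M x)
      <-> h1 <= coord x (N - 1)%N)) ->
  (forall x, on_sphere x ->
     ((forall y, on_sphere y -> rotfun u M x <= rotfun u M y)
      <-> coord x (N - 1)%N <= h2)) ->
  (forall x y, on_sphere x -> on_sphere y -> coord x (N - 1)%N = coord y (N - 1)%N ->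
     rotfun u M x = rotfun u M y) ->
  (forall al be, PI / 2 <= al -> al <= be -> be <= 3 * PI / 2 ->
     rotfun u M (circpt N be) <= rotfun u M (circpt N al)) ->
  a <> (fun _ => 0) ->
  (in_H a (mapp (trmat M) (e_last N)) ->
     forall x, in_H a x -> on_sphere x -> u (refl a x) <= u x) /\
  (in_compl_closure_H a (mapp (trmat M) (e_last N)) ->
     forall x, in_H a x -> on_sphere x -> u x <= u (refl a x)).
Proof.
(* Continuity, positivity, nonconstancy, separability and the description of the
   extremal sets are not needed: the level-set and half-circle conditions suffice. *)
move=> N_ge2 _ _ _ _ M_orth _ _ _ _ _ u_level u_circ a_neq0.
have a_gt0 := dot_gt0 a_neq0.
have le_u := le_rotfun_height N_ge2 M_orth u_level u_circ.
rewrite /in_H /in_compl_closure_H.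
have shift_gt0 x : 0 < dot a x -> 0 < dot a x / dot a a by move=> ?; apply: Rdiv_lt_0_compat.
split=> p_side x ax_gt0 x1; apply: le_u => //; try exact: refl_on_sphere;
  rewrite dot_refl (dotC _ a); have := shift_gt0 x ax_gt0; nra.
Qed.
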